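(* Let $G$ be a metrizable abelian topological group in which every cyclic subgroup is discrete. The following are equivalent: (i) $G$ contains a subgroup topologically isomorphic to $S_A$ for some infinite subset $A$ of $G$; (ii) $G$ is not NSS.
   Context: For $a\in G$, $\langle a\rangle$ is the cyclic subgroup generated by $a$ with the subspace topology. $S_A=\bigoplus_{a\in A}\langle a\rangle$ is the subgroup of finitely supported elements of $\prod_{a\in A}\langle a\rangle$, with the subspace topology of the Tychonoff product topology. A topological group is NSS if it has a neighbourhood of the identity containing no non-trivial subgroup. *)

From HB Require Import structures.
From mathcomp Require Import all_boot all_order all_algebra.
From mathcomp Require Import all_classical all_reals all_analysis.
From mathcomp Require Import Rstruct Rstruct_topology.
Set Implicit Arguments. Unset Strict Implicit. Unset Printing Implicit Defensive.
Import Order.TTheory GRing.Theory Num.Theory.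
Local Open Scope classical_set_scope.
Local Open Scope ring_scope.

(* Topologies: a subset [S : set T] of a topological space is viewed as the
   type [set_type S] (written [S : Type]) with MathComp-Analysis' subspace
   (= initial for the inclusion) topology; dependent products
   [prod_topology T] carry the Tychonoff product topology. *)

Definition metrizable (T : topologicalType) : Prop :=
  exists d : T -> T -> Rdefinitions.R,
    [/\ forall x y, d x y = 0 <-> x = y,
        forall x y, d x y = d y x,
        forall x y z, d x z <= d x y + d y z
      & forall U : set T, open U <->
          (forall x, U x -> exists2 e : Rdefinitions.R, 0 < e &
                [set y | d x y < e] `<=` U)].

Definition is_subgroup (G : zmodType) (H : set G) : Prop :=
  H 0 /\ (forall x y, H x -> H y -> H (x - y)).

Definition cyc (G : zmodType) (a : G) : set G := [set x | exists n : int, x = a *~ n].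

Definition discrete_subspace (T : topologicalType) (S : set T) : Prop :=
  forall x : S, open [set x].

Definition NSS (G : topologicalZmodType) : Prop :=
  exists U : set G, nbhs (0 : G) U /\
    forall H : set G, is_subgroup H -> H `<=` U -> H = [set 0].

Definition cyc_prod (G : topologicalZmodType) (A : set G) :=
  prod_topology (fun a : A => (cyc (val a) : Type)).

(* S_A = (+)_{a in A} <a> : the finitely supported elements of the product *)
Definition S_set (G : topologicalZmodType) (A : set G) : set (cyc_prod A) :=
  [set f | finite_set [set a : set_type A |
     val ((f : forall a : set_type A, set_type (cyc (val a))) a) != 0]].

Definition S_ (G : topologicalZmodType) (A : set G) : Type := @S_set G A.

Definition S_add_rel (G : topologicalZmodType) (A : set G) (f g h : S_ A) : Prop :=
  let ev (u : S_ A) (a : set_type A) : G :=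
    val ((val u : forall a : set_type A, set_type (cyc (val a))) a) in
  forall a : set_type A, ev h a = ev f a + ev g a.

Definition topIsoS (G : topologicalZmodType) (A : set G) (H : set G) : Prop :=
  is_subgroup H /\
  exists (phi : S_ A -> (H : Type)) (psi : (H : Type) -> S_ A),
    [/\ cancel phi psi, cancel psi phi,
        continuous phi, continuous psi
      & forall f g h : S_ A, S_add_rel f g h ->
          val (phi h) = val (phi f) + val (phi g)].

From HB Require Import structures.
From mathcomp Require Import all_boot all_order all_algebra.
From mathcomp Require Import all_classical all_reals all_analysis.
From mathcomp Require Import Rstruct Rstruct_topology.
Set Implicit Arguments. Unset Strict Implicit. Unset Printing Implicit Defensive.
Import Order.TTheory GRing.Theory Num.Theory.
Local Open Scope classical_set_scope.
Local Open Scope ring_scope.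

(* (i) -> (ii): in S_A with A infinite, the multiples k_n e_(b_n) of unit
   vectors at distinct points b_n tend to 0 whatever the integers k_n.  If U
   is a neighbourhood of 0 containing no non-trivial subgroup, the image of
   each <e_b> (b <> 0) is a non-trivial subgroup, so some k_n sends the image
   of k_n e_(b_n) outside U, contradicting continuity at 0.

   (ii) -> (i): fix a countable base (B_n) at 0.  Not NSS gives a non-trivial
   cyclic subgroup <a_n> inside any neighbourhood, and discreteness of <a_n>
   gives a neighbourhood Z_(n+1) meeting each coset of <a_n> at most once.
   Choosing <a_n> + Z_(n+1) inside Z_n /\ B_n inductively, every sum
   sum_(N <= i < M) c_i with c_i in <a_i> lies in B_N (summation is
   continuous) and a sum sum_(i < M) c_i lying in Z_N forces c_i = 0 for
   i < N (its inverse is continuous).  Hence summation is a topological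
   isomorphism of S_A, A = {a_n}, onto its image. *)

Section CyclicSubgroups.
Variable G : zmodType.

Lemma cyc0 (a : G) : cyc a 0.
Proof. by exists 0; rewrite mulr0z. Qed.

Lemma cyc_id (a : G) : cyc a a.
Proof. by exists 1; rewrite mulr1z. Qed.

Lemma cycB (a x y : G) : cyc a x -> cyc a y -> cyc a (x - y).
Proof. by move=> [m ->] [n ->]; exists (m - n); rewrite mulrzBr. Qed.

Lemma cyc_sub_subgroup (H : set G) (x : G) : is_subgroup H -> H x -> cyc x `<=` H.
Proof.
move=> [H0 HB] Hx.
have HN y : H y -> H (- y) by move=> Hy; rewrite -sub0r; apply: HB.
have HD y z : H y -> H z -> H (y + z).
  by move=> Hy Hz; rewrite -[z]opprK; apply: HB => //; apply: HN.
have Hn n : H (x *+ n) by elim: n => [|n IH]; rewrite ?mulr0n // mulrS; apply: HD.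
move=> _ [[n|n] ->]; first exact: Hn.
by rewrite NegzE mulrNz; apply: HN; apply: Hn.
Qed.

Definition cyc_coefs (a c : nat -> G) := forall i, cyc (a i) (c i).

Lemma cyc_coefsB (a c d : nat -> G) :
  cyc_coefs a c -> cyc_coefs a d -> cyc_coefs a (fun i => c i - d i).
Proof. by move=> hc hd i; apply: cycB. Qed.

Lemma sumr_nat_trunc (c : nat -> G) M K :
  (forall i, (M <= i)%N -> c i = 0) -> (M <= K)%N ->
  \sum_(0 <= i < K) c i = \sum_(0 <= i < M) c i.
Proof.
move=> c0 MK; rewrite (@big_cat_nat _ _ _ M) //=.
have -> : \sum_(M <= i < K) c i = 0.
  by rewrite big_nat_cond big1 // => i /andP [/andP [Mi _] _]; apply: c0.
by rewrite addr0.
Qed.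

Lemma sumr_nat_eq0 (c : nat -> G) N :
  (forall i, (i < N)%N -> c i = 0) -> \sum_(0 <= i < N) c i = 0.
Proof. by move=> c0; rewrite big_nat_cond big1 // => i /andP [/andP [_ iN] _]; apply: c0. Qed.

End CyclicSubgroups.

Lemma finite_nat_bounded (X : set nat) : finite_set X -> exists M, forall n, X n -> (n < M)%N.
Proof.
move=> /finite_seqP [s ->]; exists (sumn s).+1 => n /=.
rewrite ltnS; elim: s => [|x s IH] //=.
rewrite in_cons => /orP [/eqP ->|/IH h]; first exact: leq_addr.
exact: leq_trans h (leq_addl _ _).
Qed.

Lemma injective_eventually_neq (T : Type) (b : nat -> T) (x : T) :
  injective b -> exists N, forall n, (N <= n)%N -> b n <> x.
Proof.
move=> b_inj; have [[n0 <-]|nx] := pselect (exists n, b n = x).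
  by exists n0.+1 => n n0n /b_inj n_n0; rewrite n_n0 ltnn in n0n.
by exists 0%N => n _ bn; apply: nx; exists n.
Qed.

Lemma infinite_set_avoid_seq (T : Type) (A : set T) (x : T) : infinite_set A ->
  exists b : nat -> T, injective b /\ forall n, A (b n) /\ b n <> x.
Proof.
move=> infA; have : infinite_set (A `\` [set x]).
  by apply: infinite_setD => //; exact: finite_set1.
move/infiniteP/card_leP => -[f].
pose b n := val (f (exist _ n (mem_set I))).
exists b; split.
  move=> m n /val_inj /(@inj _ _ _ f) mn.
  by have /(congr1 val) := mn (mem_set I) (mem_set I).
by move=> n; case: (set_mem (valP (f (exist _ n (mem_set I))))).
Qed.

Lemma metrizable_countable_nbhs (T : topologicalType) (x : T) : metrizable T ->
  exists B : nat -> set T, (forall n, nbhs x (B n)) /\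
    (forall V, nbhs x V -> exists n, B n `<=` V).
Proof.
case=> d [d0 _ dtri dopen].
exists (fun n => [set y | d x y < n.+1%:R^-1]); split.
  move=> n; apply: open_nbhs_nbhs; split; last by rewrite /= (proj2 (d0 x x) erefl).
  apply/dopen => y /= hy; exists (n.+1%:R^-1 - d x y); first by rewrite subr_gt0.
  move=> z /= hz; apply: (le_lt_trans (dtri x y z)).
  by rewrite -ltrBrDl.
move=> V; rewrite nbhsE => -[U [oU Ux UV]].
have [e e0 eU] := proj1 (dopen U) oU x Ux.
have [k hk] := ltr_add_invr e0; rewrite add0r in hk.
by exists k => y /= hy; apply/UV/eU/(lt_trans hy).
Qed.

Lemma nbhs_subspace (T : topologicalType) (S : set T) (x : S) (V : set T) :
  nbhs (val x) V -> nbhs x [set y : S | V (val y)].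
Proof.
have cv : continuous (set_val : S -> T) by exact: initial_continuous.
exact: cv.
Qed.

Section TopologicalGroup.
Variable G : topologicalZmodType.

Lemma nbhs0_addsub_split (W : set G) : nbhs 0 W -> exists2 Z : set G, nbhs 0 Z &
  forall x y, Z x -> Z y -> W (x + y) /\ W (x - y).
Proof.
move=> W0.
have hA : nbhs ((0 : G), (0 : G)) [set p : G * G | W (p.1 + p.2)].
  by apply: (@add_continuous G (0, 0)); rewrite /= addr0.
have hS : nbhs ((0 : G), (0 : G)) [set p : G * G | W (p.1 - p.2)].
  by apply: (@sub_continuous G (0, 0)); rewrite /= subr0.
case: hA => -[P Q] /= [nP nQ] sPQ.
case: hS => -[P' Q'] /= [nP' nQ'] sPQ'.
exists (P `&` Q `&` (P' `&` Q')); first by apply: filterI; apply: filterI.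
move=> x y [[Px Qx] [P'x Q'x]] [[Py Qy] [P'y Q'y]].
by split; [apply: (sPQ (x, y)) | apply: (sPQ' (x, y))].
Qed.

Lemma nbhs_translate0 (x : G) (V : set G) : nbhs x V -> nbhs 0 [set y | V (x + y)].
Proof.
move=> Vx.
have c : continuous (fun y : G => x + y).
  move=> y; apply: (@continuous_comp _ _ _ (fun y => (x, y)) (fun p : G * G => p.1 + p.2)).
    by apply: cvg_pair => /=; [exact: cvg_cst | exact: cvg_id].
  exact: add_continuous.
by apply: (c 0); rewrite /= addr0.
Qed.

Lemma nbhs_translate (x : G) (E : set G) : nbhs 0 E -> nbhs x [set y | E (y - x)].
Proof.
move=> E0.
have c : continuous (fun y : G => y - x).
  move=> y; apply: (@continuous_comp _ _ _ (fun y => (y, x)) (fun p : G * G => p.1 - p.2)).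
    by apply: cvg_pair => /=; [exact: cvg_id | exact: cvg_cst].
  exact: sub_continuous.
by apply: (c x); rewrite /= subrr.
Qed.

Lemma discrete_cyc_isolated (a : G) : discrete_subspace (cyc a) ->
  exists2 O : set G, nbhs 0 O & forall y, cyc a y -> O y -> y = 0.
Proof.
move=> hd; have m0 : (0 : G) \in cyc a by apply: mem_set; exact: cyc0.
case: (hd (exist _ 0 m0)) => O oO eqO.
have O0 : O 0 by have : (set_val @^-1` O) (exist _ 0 m0) by rewrite eqO.
exists O; first exact: open_nbhs_nbhs.
move=> y cy Oy; have my : y \in cyc a by apply: mem_set.
have : (set_val @^-1` O) (exist _ y my) by [].
by rewrite eqO => /(congr1 val).
Qed.

End TopologicalGroup.

Section FinitelySupported.
Variables (G : topologicalZmodType) (A : set G).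

Definition coord (u : S_ A) (x : A) : G :=
  val ((val u : forall a : set_type A, set_type (cyc (val a))) x).

Lemma S_ext (u v : S_ A) : (forall x, coord u x = coord v x) -> u = v.
Proof.
move=> h; apply: val_inj; apply: functional_extensionality_dep => x.
by apply: val_inj; exact: h.
Qed.

Definition zero_prod : cyc_prod A :=
  fun x => exist _ (val x *~ 0) (mem_set (ex_intro _ 0 erefl)).

Lemma zero_prod_S : @S_set G A zero_prod.
Proof.
apply: (sub_finite_set _ (finite_set0 A)) => x /=.
by rewrite /zero_prod /= mulr0z eqxx.
Qed.

Definition S_zero : S_ A := exist _ zero_prod (mem_set zero_prod_S).

Lemma coord_zero x : coord S_zero x = 0.
Proof. by rewrite /coord /= mulr0z. Qed.

Definition single_prod (b : A) (k : int) : cyc_prod A :=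
  fun x => exist _ (val x *~ (if x == b then k else 0)) (mem_set (ex_intro _ _ erefl)).

Lemma single_prod_S b k : @S_set G A (single_prod b k).
Proof.
apply: (sub_finite_set _ (finite_set1 b)) => x /=.
by rewrite /single_prod /=; have [//|_] := eqVneq x b; rewrite mulr0z eqxx.
Qed.

Definition S_single b k : S_ A := exist _ (single_prod b k) (mem_set (single_prod_S b k)).

Lemma coord_single b k x : coord (S_single b k) x = val x *~ (if x == b then k else 0).
Proof. by []. Qed.

Lemma S_add_zero : S_add_rel S_zero S_zero S_zero.
Proof. by move=> x /=; rewrite mulr0z addr0. Qed.

Lemma S_add_single b k l : S_add_rel (S_single b (k - l)) (S_single b l) (S_single b k).
Proof.
move=> x /=; case: ifP => _; last by rewrite mulr0z addr0.
by rewrite -mulrzDr subrK.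
Qed.

Lemma S_single0 b : S_single b 0 = S_zero.
Proof. by apply: S_ext => x; rewrite coord_single coord_zero; case: ifP; rewrite mulr0z. Qed.

(* Convergence in the product topology is coordinatewise, and every
   coordinate of S_single (b n) (k n) eventually vanishes. *)
Lemma S_single_cvg0 (b : nat -> A) (k : nat -> int) :
  injective b -> (fun n => S_single (b n) (k n)) @ \oo --> S_zero.
Proof.
move=> b_inj Q; rewrite nbhsE => -[P [oP Pz] PQ]; case: oP => O oO eqO.
have Oz : O (val S_zero) by move: Pz; rewrite -eqO.
have cv : (fun n => val (S_single (b n) (k n)) : cyc_prod A) @ \oo -->
      (val S_zero : cyc_prod A).
  apply/cvg_sup => i U [V] [[W] oW <-] WfN WU.
  apply: (filterS WU); rewrite nbhs_simpl.
  have [N bN] := injective_eventually_neq i b_inj.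
  exists N => // n /= /bN bni.
  suff -> : single_prod (b n) (k n) i = zero_prod i by [].
  by apply: val_inj; rewrite /= ifN_eq //; apply/eqP => /esym.
have := cv O (open_nbhs_nbhs (conj oO Oz)).
rewrite nbhs_simpl => -[N _ hN]; exists N => // n /hN hn.
by apply: PQ; rewrite -eqO.
Qed.

End FinitelySupported.

Arguments S_zero {G} A.

Section SubgroupNotNSS.
Variables (G : topologicalZmodType) (A H : set G).
Variables (phi : S_ A -> (H : Type)) (psi : (H : Type) -> S_ A).
Hypotheses (phiK : cancel phi psi) (phi_cont : continuous phi).
Hypothesis phi_add : forall f g h, S_add_rel f g h -> val (phi h) = val (phi f) + val (phi g).

Lemma phi_zero : val (phi (S_zero A)) = 0.
Proof.
have /(congr1 (fun t => t - val (phi (S_zero A)))) := phi_add (@S_add_zero _ A).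
by rewrite subrr addrK.
Qed.

Lemma phi_inj : injective (fun u => val (phi u)).
Proof. by move=> u v /val_inj /(congr1 psi); rewrite !phiK. Qed.

Definition phi_multiples (b : A) : set G := [set y | exists k, y = val (phi (S_single b k))].

Lemma phi_multiples_subgroup b : is_subgroup (phi_multiples b).
Proof.
split; first by exists 0; rewrite S_single0 phi_zero.
move=> _ _ [k ->] [l ->]; exists (k - l).
by rewrite (phi_add (S_add_single b k l)) addrK.
Qed.

Lemma phi_single_escape (U : set G) :
  (forall K, is_subgroup K -> K `<=` U -> K = [set 0]) ->
  forall b : A, val b != 0 -> exists k, ~ U (val (phi (S_single b k))).
Proof.
move=> hU b b0; apply: contrapT => allU.
have /hU : phi_multiples b `<=` U.
  by move=> _ [k ->]; apply: contrapT => nk; apply: allU; exists k.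
move=> /(_ (phi_multiples_subgroup b)) b_0.
have : phi_multiples b (val (phi (S_single b 1))) by exists 1.
rewrite b_0 /= -phi_zero => /phi_inj /(congr1 (fun u => coord u b)).
by rewrite coord_single coord_zero eqxx mulr1z => b_eq0; rewrite b_eq0 eqxx in b0.
Qed.

Lemma phi_not_NSS : infinite_set A -> ~ NSS G.
Proof.
move=> infA [U [U0 hU]].
have [b [b_inj b_in]] := infinite_set_avoid_seq 0 infA.
pose bs n : A := exist _ (b n) (mem_set (proj1 (b_in n))).
have bs_inj : injective bs by move=> m n /(congr1 val) /b_inj.
have bs0 n : val (bs n) != 0 by apply/eqP; case: (b_in n).
pose k n := projT1 (cid (phi_single_escape hU (bs0 n))).
have kU n : ~ U (val (phi (S_single (bs n) (k n)))).
  exact: projT2 (cid (phi_single_escape hU (bs0 n))).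
have nU : nbhs (S_zero A) [set u | U (val (phi u))].
  have : nbhs (phi (S_zero A)) [set y : (H : Type) | U (val y)].
    by apply: nbhs_subspace; rewrite phi_zero.
  exact: phi_cont.
have [N _ hN] := S_single_cvg0 k bs_inj nU.
exact: kU N (hN N (leqnn N)).
Qed.

End SubgroupNotNSS.

Section SummationEmbedding.
Variable G : topologicalZmodType.
Hypothesis cyc_discrete : forall a : G, discrete_subspace (cyc a).
Variable a : nat -> G.
Hypothesis a_inj : injective a.
Hypothesis tail_small : forall V : set G, nbhs 0 V -> exists N, forall c, cyc_coefs a c ->
  forall M, (N <= M)%N -> V (\sum_(N <= i < M) c i).
Hypothesis head_determined : forall N, exists2 E : set G, nbhs 0 E &
  forall c M, cyc_coefs a c -> (forall i, (M <= i)%N -> c i = 0) ->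
  E (\sum_(0 <= i < M) c i) -> forall i, (i < N)%N -> c i = 0.

Definition at_index n : range a := exist _ (a n) (mem_set (imageT a n)).
Definition index_of (x : range a) : nat := s2val (cid2 (set_mem (valP x))).

Lemma index_ofP x : a (index_of x) = val x.
Proof. exact: (s2valP' (cid2 (set_mem (valP x)))). Qed.

Lemma at_indexK : cancel at_index index_of.
Proof. by move=> n; apply: a_inj; rewrite index_ofP. Qed.

Lemma index_ofK : cancel index_of at_index.
Proof. by move=> x; apply: val_inj; exact: index_ofP. Qed.

Definition coef (f : S_ (range a)) n : G := coord f (at_index n).

Lemma coef_cyc f : cyc_coefs a (coef f).
Proof. by move=> n; exact: (set_mem (valP ((val f : cyc_prod (range a)) (at_index n)))). Qed.

Lemma coef_ext (f g : S_ (range a)) : (forall n, coef f n = coef g n) -> f = g.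
Proof. by move=> h; apply: S_ext => x; rewrite -[x]index_ofK; exact: h. Qed.

Lemma coef_zero n : coef (S_zero (range a)) n = 0.
Proof. exact: coord_zero. Qed.

Lemma coef_finite_support f : exists M, forall n, (M <= n)%N -> coef f n = 0.
Proof.
have fin : finite_set [set x : range a | coord f x != 0] := set_mem (valP f).
have [M hM] : exists M, forall n, [set n | coef f n != 0] n -> (n < M)%N.
  apply: finite_nat_bounded; apply: (sub_finite_set _ (finite_image index_of fin)).
  by move=> n /= hn; exists (at_index n); rewrite ?at_indexK.
exists M => n Mn; apply/eqP; apply: contraT => /hM.
by rewrite ltnNge Mn.
Qed.

Definition supp_bound f := sval (cid (coef_finite_support f)).

Lemma supp_boundP f n : (supp_bound f <= n)%N -> coef f n = 0.
Proof. exact: (svalP (cid (coef_finite_support f)) n). Qed.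

Definition sumS f := \sum_(0 <= i < supp_bound f) coef f i.

Lemma sumSE f M : (forall n, (M <= n)%N -> coef f n = 0) ->
  sumS f = \sum_(0 <= i < M) coef f i.
Proof.
move=> hM; rewrite /sumS -(sumr_nat_trunc (@supp_boundP f) (leq_maxl _ M)).
by rewrite (sumr_nat_trunc hM (leq_maxr (supp_bound f) M)).
Qed.

Lemma sumSE_bound f M : (supp_bound f <= M)%N -> sumS f = \sum_(0 <= i < M) coef f i.
Proof. by move=> h; apply: sumSE => n hn; apply: supp_boundP; exact: leq_trans hn. Qed.

Lemma sumSB f g M : (supp_bound f <= M)%N -> (supp_bound g <= M)%N ->
  sumS f - sumS g = \sum_(0 <= i < M) (coef f i - coef g i).
Proof. by move=> hf hg; rewrite (sumSE_bound hf) (sumSE_bound hg) sumrB. Qed.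

Lemma coefB_supp f g n : (maxn (supp_bound f) (supp_bound g) <= n)%N ->
  coef f n - coef g n = 0.
Proof. by rewrite geq_max => /andP [hf hg]; rewrite !supp_boundP ?subrr. Qed.

Lemma sumS_head N : exists2 E : set G, nbhs 0 E &
  forall f g, E (sumS f - sumS g) -> forall i, (i < N)%N -> coef f i = coef g i.
Proof.
have [E E0 hE] := head_determined N; exists E => // f g Efg i iN.
apply/eqP; rewrite -subr_eq0; apply/eqP.
apply: (hE (fun i => coef f i - coef g i) (maxn (supp_bound f) (supp_bound g))) iN.
- exact: cyc_coefsB (coef_cyc f) (coef_cyc g).
- exact: coefB_supp.
- by rewrite -sumSB ?leq_maxl ?leq_maxr.
Qed.

Lemma sumS_tail (V : set G) : nbhs 0 V -> exists N, forall f g,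
  (forall i, (i < N)%N -> coef f i = coef g i) -> V (sumS f - sumS g).
Proof.
move=> /tail_small [N hN]; exists N => f g fg.
pose M := maxn N (maxn (supp_bound f) (supp_bound g)).
have NM : (N <= M)%N := leq_maxl _ _.
have fM : (supp_bound f <= M)%N := leq_trans (leq_maxl _ _) (leq_maxr _ _).
have gM : (supp_bound g <= M)%N := leq_trans (leq_maxr _ _) (leq_maxr _ _).
rewrite (sumSB fM gM) (@big_cat_nat _ _ _ N) //= sumr_nat_eq0 ?add0r.
  exact: hN (cyc_coefsB (coef_cyc f) (coef_cyc g)) _ NM.
by move=> i /fg ->; rewrite subrr.
Qed.

Section FromCoefficients.
Variables (c : nat -> G) (M : nat).
Hypotheses (c_cyc : cyc_coefs a c) (c_supp : forall n, (M <= n)%N -> c n = 0).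

Lemma coefs_cyc (x : range a) : cyc (val x) (c (index_of x)).
Proof. by rewrite -index_ofP; apply: c_cyc. Qed.

Definition of_coefs_prod : cyc_prod (range a) :=
  fun x => exist _ (c (index_of x)) (mem_set (coefs_cyc x)).

Lemma of_coefs_prod_S : @S_set G (range a) of_coefs_prod.
Proof.
apply: (sub_finite_set _ (finite_image at_index (finite_II M))) => x /= cx.
exists (index_of x); last exact: index_ofK.
by rewrite /= ltnNge; apply/negP => /c_supp c0; rewrite c0 eqxx in cx.
Qed.

Definition of_coefs : S_ (range a) := exist _ of_coefs_prod (mem_set of_coefs_prod_S).

Lemma coef_of_coefs n : coef of_coefs n = c n.
Proof. by rewrite /coef /coord /= at_indexK. Qed.

Lemma sumS_of_coefs : sumS of_coefs = \sum_(0 <= i < M) c i.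
Proof.
rewrite (@sumSE of_coefs M); last by move=> n Mn; rewrite coef_of_coefs c_supp.
by apply: eq_bigr => i _; rewrite coef_of_coefs.
Qed.

End FromCoefficients.

Lemma sumS_subgroup : is_subgroup (range sumS).
Proof.
split.
  exists (S_zero (range a)) => //.
  by rewrite (@sumSE _ 0%N) ?big_geq // => n _; exact: coef_zero.
move=> _ _ [f _ <-] [g _ <-].
have cyc_fg := cyc_coefsB (coef_cyc f) (coef_cyc g).
exists (of_coefs cyc_fg (@coefB_supp f g)) => //.
by rewrite sumS_of_coefs (sumSB (leq_maxl _ _) (leq_maxr _ _)).
Qed.

Lemma sumS_add f g h : S_add_rel f g h -> sumS h = sumS f + sumS g.
Proof.
move=> fgh.
pose M := maxn (supp_bound h) (maxn (supp_bound f) (supp_bound g)).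
have hM : (supp_bound h <= M)%N := leq_maxl _ _.
have fM : (supp_bound f <= M)%N := leq_trans (leq_maxl _ _) (leq_maxr _ _).
have gM : (supp_bound g <= M)%N := leq_trans (leq_maxr _ _) (leq_maxr _ _).
rewrite (sumSE_bound fM) (sumSE_bound gM) (sumSE_bound hM) -big_split /=.
by apply: eq_bigr => i _; exact: (fgh (at_index i)).
Qed.

Lemma sumS_inj : injective sumS.
Proof.
move=> f g fg; apply: coef_ext => n.
have [E E0 hE] := sumS_head n.+1; apply: hE (ltnSn n).
by rewrite fg subrr; apply: nbhs_singleton.
Qed.

Lemma prod_coord_locally_const (F0 : cyc_prod (range a)) n :
  nbhs F0 [set F : cyc_prod (range a) | F (at_index n) = F0 (at_index n)].
Proof.
have : nbhs (F0 (at_index n)) [set F0 (at_index n)].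
  by apply: open_nbhs_nbhs; split; [exact: cyc_discrete |].
exact: (@proj_continuous _ _ (at_index n) F0).
Qed.

Lemma coef_head_nbhs (f : S_ (range a)) N :
  nbhs f [set g : S_ (range a) | forall n, (n < N)%N -> coef g n = coef f n].
Proof.
suff : nbhs (val f : cyc_prod (range a)) [set F : cyc_prod (range a) |
    forall n, (n < N)%N -> F (at_index n) = (val f : cyc_prod (range a)) (at_index n)].
  move=> /(@nbhs_subspace _ _ f); apply: filterS => g /= fg n nN.
  exact: (congr1 val (fg n nN)).
elim: N => [|N IH]; first by apply: filterS filterT => F _ n.
apply: filterS (filterI IH (prod_coord_locally_const _ N)) => F [h1 h2] n.
by rewrite ltnS leq_eqVlt => /orP [/eqP -> | /h1].
Qed.

Lemma sumS_continuous : continuous sumS.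
Proof.
move=> f V /= /nbhs_translate0 /sumS_tail [N hN].
apply: filterS (coef_head_nbhs f N) => g /hN.
by rewrite /= addrC subrK.
Qed.

Definition emb (f : S_ (range a)) : range sumS := exist _ (sumS f) (mem_set (imageT sumS f)).
Definition emb_inv (h : range sumS) : S_ (range a) := s2val (cid2 (set_mem (valP h))).

Lemma emb_invP h : sumS (emb_inv h) = val h.
Proof. exact: (s2valP' (cid2 (set_mem (valP h)))). Qed.

Lemma embK : cancel emb emb_inv.
Proof. by move=> f; apply: sumS_inj; rewrite emb_invP. Qed.

Lemma emb_invK : cancel emb_inv emb.
Proof. by move=> h; apply: val_inj; rewrite /= emb_invP. Qed.

Lemma emb_continuous : continuous emb.
Proof. exact: (continuous_comp_initial (f := emb) sumS_continuous). Qed.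

Lemma emb_inv_coef_locally_const (h : range sumS) n :
  nbhs h [set y | coef (emb_inv y) n = coef (emb_inv h) n].
Proof.
have [E E0 hE] := sumS_head n.+1.
have /(@nbhs_subspace _ _ h) := nbhs_translate (val h) E0.
by apply: filterS => y /= Ey; apply: hE (ltnSn n); rewrite !emb_invP.
Qed.

Lemma emb_inv_continuous : continuous emb_inv.
Proof.
apply: (continuous_comp_initial (f := emb_inv)) => h.
have : Filter ((set_val \o emb_inv) @ h) by apply: fmap_filter; apply: nbhs_filter.
move=> FF; apply/cvg_sup => i U [V] [[W] oW <-] WfN WU.
have : nbhs h [set y | (val (emb_inv y) : cyc_prod _) i = (val (emb_inv h) : cyc_prod _) i].
  rewrite -[i]index_ofK; apply: filterS (emb_inv_coef_locally_const h (index_of i)).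
  by move=> y hy; apply: val_inj; exact: hy.
by apply: filterS => y /= hy; apply: WU; move: WfN; rewrite /= !set_valE /= hy.
Qed.

Lemma summation_topIsoS : infinite_set (range a) /\ topIsoS (range a) (range sumS).
Proof.
split.
  move=> fin; apply: infinite_nat.
  apply: (sub_finite_set _ (finite_preimage (f := a) _ fin)) => [n _|]; first exact: imageT.
  by move=> x y _ _; apply: a_inj.
split; first exact: sumS_subgroup.
exists emb, emb_inv; split.
- exact: embK.
- exact: emb_invK.
- exact: emb_continuous.
- exact: emb_inv_continuous.
- by move=> f g h /sumS_add.
Qed.

End SummationEmbedding.

Lemma not_NSS_cyc (G : topologicalZmodType) : ~ NSS G ->
  forall W : set G, nbhs 0 W -> exists2 x : G, x != 0 & cyc x `<=` W.
Proof.
move=> not_nss W W0; apply: contrapT => no_x; apply: not_nss.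
exists W; split => // K K_sub KW.
apply/seteqP; split => [y Ky | _ ->]; last by case: K_sub.
apply/eqP; apply: contrapT => y0; apply: no_x; exists y; first exact/negP.
by move=> z /(cyc_sub_subgroup K_sub Ky) /KW.
Qed.

Section IsolatedSequence.
Variable G : topologicalZmodType.
Hypothesis not_nss : ~ NSS G.
Hypothesis cyc_discrete : forall a : G, discrete_subspace (cyc a).
Variable B : nat -> set G.
Hypothesis B_nbhs : forall n, nbhs 0 (B n).

(* [p = (a, P, Z)]: a non-zero generator [a], a set [P] containing [<a>]
   with [P + P] inside [W], and the next neighbourhood [Z], inside [P], in
   which distinct points never differ by an element of [<a>]. *)
Definition isolating_step (W : set G) (p : G * set G * set G) :=
  [/\ p.1.1 != 0, cyc p.1.1 `<=` p.1.2,
      (forall x y, p.1.2 x -> p.1.2 y -> W (x + y)),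
      nbhs 0 p.2 /\ p.2 `<=` p.1.2
    & (forall x y, p.2 x -> p.2 y -> cyc p.1.1 (x - y) -> x - y = 0)].

Lemma isolating_step_ex (W : set G) : nbhs 0 W -> exists p, isolating_step W p.
Proof.
move=> /nbhs0_addsub_split [P P0 PP].
have [x x0 xP] := not_NSS_cyc not_nss P0.
have [D D0 Dx] := discrete_cyc_isolated (@cyc_discrete x).
have [Z Z0 ZZ] := nbhs0_addsub_split D0.
exists (x, P, Z `&` P); split => //=.
- by move=> y z Py Pz; case: (PP y z Py Pz).
- by split; [exact: filterI | move=> y []].
- by move=> y z [Zy _] [Zz _] xyz; apply: Dx => //; case: (ZZ y z Zy Zz).
Qed.

Definition next_step (W : set G) (W0 : nbhs 0 W) : {p | isolating_step W p} :=
  cid (isolating_step_ex W0).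

Lemma isolating_step_nbhs W p : isolating_step W p -> nbhs 0 p.2.
Proof. by case=> _ _ _ []. Qed.

Fixpoint nest_sig (n : nat) : {Z : set G | nbhs 0 Z} :=
  match n with
  | 0 => exist _ setT filterT
  | n'.+1 => let s := next_step (filterI (svalP (nest_sig n')) (B_nbhs n')) in
             exist _ (sval s).2 (isolating_step_nbhs (svalP s))
  end.

Definition nest n := sval (nest_sig n).
Definition step_at n := next_step (filterI (svalP (nest_sig n)) (B_nbhs n)).
Definition gen n := (sval (step_at n)).1.1.
Definition pad n := (sval (step_at n)).1.2.

Lemma step_atP n : isolating_step (nest n `&` B n) (sval (step_at n)).
Proof. exact: svalP. Qed.

Lemma gen_neq0 n : gen n != 0. Proof. by case: (step_atP n). Qed.
Lemma cyc_gen_pad n : cyc (gen n) `<=` pad n. Proof. by case: (step_atP n). Qed.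
Lemma nest_nbhs n : nbhs 0 (nest n). Proof. exact: svalP. Qed.
Lemma nest_succ_pad n : nest n.+1 `<=` pad n. Proof. by case: (step_atP n) => _ _ _ []. Qed.

Lemma pad_add n x y : pad n x -> pad n y -> (nest n `&` B n) (x + y).
Proof. by case: (step_atP n) => _ _ h _ _; apply: h. Qed.

Lemma nest_succ_isolated n x y :
  nest n.+1 x -> nest n.+1 y -> cyc (gen n) (x - y) -> x - y = 0.
Proof. by case: (step_atP n) => _ _ _ _; apply. Qed.

Lemma pad_sub n : pad n `<=` nest n `&` B n.
Proof. by move=> x px; rewrite -[x]addr0; apply: pad_add => //; apply/cyc_gen_pad/cyc0. Qed.

Lemma nest_decr m n : (m <= n)%N -> nest n `<=` nest m.
Proof.
move=> /subnKC <-; move: (n - m)%N => k; elim: k => [|k IH]; first by rewrite addn0.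
by rewrite addnS => x /nest_succ_pad /pad_sub [/IH].
Qed.

(* [gen j] lies in [nest (i.+1)] together with [0], and [gen i - 0] is in [<gen i>]. *)
Lemma gen_inj : injective gen.
Proof.
suff lt_neq i j : (i < j)%N -> gen i <> gen j.
  by move=> i j gij; case: (ltngtP i j) => // /lt_neq; rewrite gij.
move=> ij gij.
have gi : nest i.+1 (gen i).
  rewrite gij; apply: (nest_decr ij).
  by case: (pad_sub (cyc_gen_pad (cyc_id (gen j)))).
have := nest_succ_isolated gi (nbhs_singleton (nest_nbhs i.+1)).
rewrite subr0 => /(_ (cyc_id _)) gi0.
by move: (gen_neq0 i); rewrite gi0 eqxx.
Qed.

Lemma nest_tail c : cyc_coefs gen c ->
  forall N M, (N <= M)%N -> (nest N `&` B N) (\sum_(N <= i < M) c i).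
Proof.
move=> c_cyc N M /subnKC <-; move: (M - N)%N => k; elim: k N => [|k IH] N.
  rewrite addn0 big_geq //; apply: nbhs_singleton.
  by apply: filterI; [exact: nest_nbhs | exact: B_nbhs].
rewrite big_ltn; last by rewrite addnS ltnS leq_addr.
rewrite -addSnnS; apply: pad_add; first exact: cyc_gen_pad.
by apply: nest_succ_pad; case: (IH N.+1).
Qed.

Lemma nest_head c : cyc_coefs gen c -> forall N t u, nest N t -> nest N u ->
  \sum_(0 <= i < N) c i + t = u -> forall i, (i < N)%N -> c i = 0.
Proof.
move=> c_cyc; elim=> [|N IH] t u Nt Nu tu i //.
rewrite big_nat_recr //= -addrA in tu.
have cNt : nest N (c N + t).
  by case: (pad_add (cyc_gen_pad (c_cyc N)) (nest_succ_pad Nt)).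
have low := IH _ _ cNt (nest_decr (leqnSn N) Nu) tu.
have cN : c N = u - t.
  by rewrite -tu sumr_nat_eq0 // add0r addrK.
have cN0 : c N = 0.
  by rewrite cN; apply: (nest_succ_isolated Nu Nt); rewrite -cN; apply: c_cyc.
by rewrite ltnS leq_eqVlt => /orP [/eqP -> | /low].
Qed.

Lemma gen_head_determined N : exists2 E : set G, nbhs 0 E &
  forall c M, cyc_coefs gen c -> (forall i, (M <= i)%N -> c i = 0) ->
  E (\sum_(0 <= i < M) c i) -> forall i, (i < N)%N -> c i = 0.
Proof.
exists (nest N); first exact: nest_nbhs.
move=> c M c_cyc cM EM.
rewrite -(sumr_nat_trunc cM (leq_maxl M N)) in EM.
apply: (@nest_head c c_cyc N (\sum_(N <= i < maxn M N) c i) _ _ EM).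
  by case: (nest_tail c_cyc (leq_maxr M N)).
by rewrite -big_cat_nat // leq_maxr.
Qed.

Hypothesis B_base : forall V, nbhs 0 V -> exists n, B n `<=` V.

Lemma gen_tail_small (V : set G) : nbhs 0 V -> exists N, forall c, cyc_coefs gen c ->
  forall M, (N <= M)%N -> V (\sum_(N <= i < M) c i).
Proof.
move=> /B_base [N BV]; exists N => c c_cyc M NM.
by apply: BV; case: (nest_tail c_cyc NM).
Qed.

End IsolatedSequence.

Theorem theorem8p2 (G : topologicalZmodType) :
  metrizable G ->
  (forall a : G, discrete_subspace (cyc a)) ->
  ((exists (A : set G) (H : set G), infinite_set A /\ topIsoS A H) <-> ~ NSS G).
Proof.
move=> metr disc; split.
  move=> [A [H [infA [_ [phi [psi [phiK _ phi_cont _ phi_add]]]]]]].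
  exact: phi_not_NSS phiK phi_cont phi_add infA.
move=> not_nss; have [B [B0 B_base]] := metrizable_countable_nbhs 0 metr.
have gen_tail := gen_tail_small not_nss disc B0 B_base.
have gen_head := gen_head_determined not_nss disc B0.
have := summation_topIsoS disc (@gen_inj _ not_nss disc _ B0) gen_tail gen_head.
by move=> embedding; do 2 eexists; exact: embedding.
Qed.
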